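(* Let $S=\{(x_1,x_2)\in\mathbb{R}^2:x_1^4-x_1^2x_2+x_2^3=0\}$, $\tilde S^{o}=\{(x_0,x_1,x_2):x_1^4-x_0x_1^2x_2+x_0x_2^3=0,\ x_0>0\}$ and $\tilde S^{c}$ the same set with $x_0\ge0$. Then the linear form $X_0-X_2$ is positive on $\mathrm{conv}(\overline{\tilde S^{o}})\setminus\{0\}$, so $\mathrm{conv}(\overline{\tilde S^{o}})$ is closed and pointed, and $S$ is not closed at $\infty$, i.e. $\overline{\tilde S^{o}}\neq\tilde S^{c}$.
   Context: A closed convex cone $K$ is pointed if $K\cap(-K)=\{0\}$. $S$ is closed at $\infty$ if $\overline{\tilde S^{o}}=\tilde S^{c}$. Overline denotes closure, $\mathrm{conv}$ convex hull. *)

From Stdlib Require Import Reals List.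
Import ListNotations.
Open Scope R_scope.

Record pt3 := P3 { c0 : R; c1 : R; c2 : R }.

Definition origin : pt3 := P3 0 0 0.
Definition padd (p q : pt3) : pt3 := P3 (c0 p + c0 q) (c1 p + c1 q) (c2 p + c2 q).
Definition pscale (t : R) (p : pt3) : pt3 := P3 (t * c0 p) (t * c1 p) (t * c2 p).
Definition popp (p : pt3) : pt3 := P3 (- c0 p) (- c1 p) (- c2 p).

Definition dist3 (p q : pt3) : R :=
  sqrt ((c0 p - c0 q)^2 + (c1 p - c1 q)^2 + (c2 p - c2 q)^2).

Definition closure3 (A : pt3 -> Prop) (p : pt3) : Prop :=
  forall eps, 0 < eps -> exists q, A q /\ dist3 p q < eps.

Definition is_closed3 (A : pt3 -> Prop) : Prop :=
  forall p, closure3 A p -> A p.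

Definition conv3 (A : pt3 -> Prop) (p : pt3) : Prop :=
  exists l : list (R * pt3),
    Forall (fun wq => 0 <= fst wq /\ A (snd wq)) l /\
    fold_right (fun wq s => fst wq + s) 0 l = 1 /\
    p = fold_right (fun wq s => padd (pscale (fst wq) (snd wq)) s) origin l.

Definition pointed3 (K : pt3 -> Prop) : Prop :=
  forall p, K p -> K (popp p) -> p = origin.

Definition S (x1 x2 : R) : Prop := x1^4 - x1^2 * x2 + x2^3 = 0.

Definition Stilde_o (p : pt3) : Prop :=
  c1 p ^ 4 - c0 p * c1 p ^ 2 * c2 p + c0 p * c2 p ^ 3 = 0 /\ 0 < c0 p.

Definition Stilde_c (p : pt3) : Prop :=
  c1 p ^ 4 - c0 p * c1 p ^ 2 * c2 p + c0 p * c2 p ^ 3 = 0 /\ 0 <= c0 p.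

Definition closed_at_infinity_S : Prop :=
  forall p, closure3 Stilde_o p <-> Stilde_c p.

(* Everything rests on one inequality (curve_bound): on the open
   homogenization, |x0| + |x1| + |x2| <= 4 (x0 - x2).  Being Lipschitz, it passes to the
   closure C, a closed cone; being subadditive/additive, it passes to conv C.  This
   gives positivity of X0 - X2 and pointedness at once, and the point (0,0,1), which lies
   in the closed homogenization but violates the inequality, shows that S is not closed
   at infinity.  Closedness of conv C uses conic Carathéodory in R^3 (every point of
   conv C is a sum of three points of C) and Bolzano–Weierstrass: the inequality bounds
   the three summands, so a common subsequence converges.  Distances are handled with
   the ℓ¹-metric, equivalent to the Euclidean one. *)
From Pilot Require Import Defs.
From Stdlib Require Import Reals List Lra Psatz Lia ClassicalEpsilon Classical.
(* Re-import Defs so that its coordinate c1 shadows the homonymous field from Reals. *)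
Import ListNotations Defs.
Open Scope R_scope.

Definition norm1 (p : pt3) : R := Rabs (c0 p) + Rabs (c1 p) + Rabs (c2 p).

Definition dist1 (p q : pt3) : R :=
  Rabs (c0 p - c0 q) + Rabs (c1 p - c1 q) + Rabs (c2 p - c2 q).

Definition lf (p : pt3) : R := c0 p - c2 p.

Lemma pt3_ext (p q : pt3) : c0 p = c0 q -> c1 p = c1 q -> c2 p = c2 q -> p = q.
Proof. destruct p, q; simpl; intros -> -> ->; reflexivity. Qed.

Lemma norm1_pos (p : pt3) : p <> origin -> 0 < norm1 p.
Proof.
  intros Hp. unfold norm1.
  pose proof (Rabs_pos (c0 p)); pose proof (Rabs_pos (c1 p)); pose proof (Rabs_pos (c2 p)).
  destruct (Req_dec (c0 p) 0) as [E0 | N0]; [| apply Rabs_pos_lt in N0; lra].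
  destruct (Req_dec (c1 p) 0) as [E1 | N1]; [| apply Rabs_pos_lt in N1; lra].
  destruct (Req_dec (c2 p) 0) as [E2 | N2]; [| apply Rabs_pos_lt in N2; lra].
  exfalso; apply Hp, pt3_ext; assumption.
Qed.

Lemma norm1_nonneg (p : pt3) : 0 <= norm1 p.
Proof.
  unfold norm1.
  pose proof (Rabs_pos (c0 p)); pose proof (Rabs_pos (c1 p)); pose proof (Rabs_pos (c2 p)); lra.
Qed.

Lemma norm1_opp (p : pt3) : norm1 (popp p) = norm1 p.
Proof. unfold norm1; simpl; rewrite !Rabs_Ropp; reflexivity. Qed.

Lemma norm1_padd (p q : pt3) : norm1 (padd p q) <= norm1 p + norm1 q.
Proof.
  unfold norm1; simpl.
  pose proof (Rabs_triang (c0 p) (c0 q)); pose proof (Rabs_triang (c1 p) (c1 q));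
  pose proof (Rabs_triang (c2 p) (c2 q)); lra.
Qed.

Lemma lf_padd (p q : pt3) : lf (padd p q) = lf p + lf q.
Proof. unfold lf; simpl; ring. Qed.

Lemma lf_opp (p : pt3) : lf (popp p) = - lf p.
Proof. unfold lf; simpl; ring. Qed.

Lemma norm1_lipschitz (p q : pt3) : norm1 p <= norm1 q + dist1 p q.
Proof.
  unfold norm1, dist1.
  pose proof (Rabs_triang_inv (c0 p) (c0 q)); pose proof (Rabs_triang_inv (c1 p) (c1 q));
  pose proof (Rabs_triang_inv (c2 p) (c2 q)); lra.
Qed.

Lemma lf_lipschitz (p q : pt3) : Rabs (lf p - lf q) <= dist1 p q.
Proof.
  unfold lf, dist1.
  replace (c0 p - c2 p - (c0 q - c2 q)) with ((c0 p - c0 q) + - (c2 p - c2 q)) by ring.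
  pose proof (Rabs_triang (c0 p - c0 q) (- (c2 p - c2 q))) as Htri. rewrite Rabs_Ropp in Htri.
  pose proof (Rabs_pos (c1 p - c1 q)); lra.
Qed.

Lemma dist1_sym (p q : pt3) : dist1 p q = dist1 q p.
Proof.
  unfold dist1.
  rewrite (Rabs_minus_sym (c0 p)), (Rabs_minus_sym (c1 p)), (Rabs_minus_sym (c2 p)).
  reflexivity.
Qed.

Lemma dist1_triangle (p q r : pt3) : dist1 p r <= dist1 p q + dist1 q r.
Proof.
  unfold dist1.
  pose proof (Rabs_triang (c0 p - c0 q) (c0 q - c0 r));
  pose proof (Rabs_triang (c1 p - c1 q) (c1 q - c1 r));
  pose proof (Rabs_triang (c2 p - c2 q) (c2 q - c2 r)).
  replace (c0 p - c0 q + (c0 q - c0 r)) with (c0 p - c0 r) in * by ring.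
  replace (c1 p - c1 q + (c1 q - c1 r)) with (c1 p - c1 r) in * by ring.
  replace (c2 p - c2 q + (c2 q - c2 r)) with (c2 p - c2 r) in * by ring.
  lra.
Qed.

Lemma dist1_padd (p q p' q' : pt3) : dist1 (padd p q) (padd p' q') <= dist1 p p' + dist1 q q'.
Proof.
  unfold dist1; simpl.
  pose proof (Rabs_triang (c0 p - c0 p') (c0 q - c0 q'));
  pose proof (Rabs_triang (c1 p - c1 p') (c1 q - c1 q'));
  pose proof (Rabs_triang (c2 p - c2 p') (c2 q - c2 q')).
  replace (c0 p + c0 q - (c0 p' + c0 q')) with (c0 p - c0 p' + (c0 q - c0 q')) by ring.
  replace (c1 p + c1 q - (c1 p' + c1 q')) with (c1 p - c1 p' + (c1 q - c1 q')) by ring.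
  replace (c2 p + c2 q - (c2 p' + c2 q')) with (c2 p - c2 p' + (c2 q - c2 q')) by ring.
  lra.
Qed.

Lemma dist1_scale (t : R) (p q : pt3) : 0 <= t -> dist1 (pscale t p) (pscale t q) = t * dist1 p q.
Proof.
  intros Ht. unfold dist1; simpl.
  rewrite <- !Rmult_minus_distr_l, !Rabs_mult, (Rabs_pos_eq t) by exact Ht. ring.
Qed.

Lemma dist1_small_eq (p q : pt3) : (forall eps, 0 < eps -> dist1 p q < eps) -> p = q.
Proof.
  intros Hsmall.
  set (d := P3 (c0 p - c0 q) (c1 p - c1 q) (c2 p - c2 q)).
  assert (Hd : d = origin).
  { apply NNPP; intros Hne. apply norm1_pos in Hne.
    specialize (Hsmall _ Hne). unfold dist1, norm1, d in Hsmall; simpl in Hsmall. lra. }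
  apply pt3_ext; [apply (f_equal c0) in Hd | apply (f_equal c1) in Hd | apply (f_equal c2) in Hd];
    unfold d in Hd; simpl in Hd; lra.
Qed.

Lemma abs_le_norm2 (a b c : R) : Rabs a <= sqrt (a ^ 2 + b ^ 2 + c ^ 2).
Proof.
  rewrite <- sqrt_Rsqr_abs. apply sqrt_le_1_alt. unfold Rsqr.
  pose proof (pow2_ge_0 b); pose proof (pow2_ge_0 c). nra.
Qed.

Lemma dist3_le_dist1 (p q : pt3) : dist3 p q <= dist1 p q.
Proof.
  unfold dist3, dist1.
  set (a := c0 p - c0 q); set (b := c1 p - c1 q); set (c := c2 p - c2 q).
  pose proof (Rabs_pos a); pose proof (Rabs_pos b); pose proof (Rabs_pos c).
  rewrite <- (sqrt_pow2 (Rabs a + Rabs b + Rabs c)) by lra.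
  apply sqrt_le_1_alt. rewrite <- (pow2_abs a), <- (pow2_abs b), <- (pow2_abs c). nra.
Qed.

Lemma dist1_le_dist3 (p q : pt3) : dist1 p q <= 3 * dist3 p q.
Proof.
  unfold dist3, dist1.
  set (a := c0 p - c0 q); set (b := c1 p - c1 q); set (c := c2 p - c2 q).
  pose proof (abs_le_norm2 a b c); pose proof (abs_le_norm2 b a c);
  pose proof (abs_le_norm2 c a b).
  replace (b ^ 2 + a ^ 2 + c ^ 2) with (a ^ 2 + b ^ 2 + c ^ 2) in * by ring.
  replace (c ^ 2 + a ^ 2 + b ^ 2) with (a ^ 2 + b ^ 2 + c ^ 2) in * by ring.
  lra.
Qed.

Lemma closure3_dist1 (A : pt3 -> Prop) (p : pt3) :
  closure3 A p <-> forall eps, 0 < eps -> exists q, A q /\ dist1 p q < eps.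
Proof.
  split; intros Hp eps Heps.
  - destruct (Hp (eps / 3)) as [q [Hq Hd]]; [lra |].
    exists q; split; [exact Hq |]. pose proof (dist1_le_dist3 p q); lra.
  - destruct (Hp eps Heps) as [q [Hq Hd]].
    exists q; split; [exact Hq |]. pose proof (dist3_le_dist1 p q); lra.
Qed.

Lemma closure3_closed (A : pt3 -> Prop) : is_closed3 (closure3 A).
Proof.
  intros p Hp. rewrite closure3_dist1 in Hp. apply closure3_dist1.
  intros eps Heps.
  destruct (Hp (eps / 2)) as [q [Hq Hpq]]; [lra |].
  rewrite closure3_dist1 in Hq. destruct (Hq (eps / 2)) as [r [Hr Hqr]]; [lra |].
  exists r; split; [exact Hr |]. pose proof (dist1_triangle p q r); lra.
Qed.

(* A domination  norm1 <= c * lf  (with c >= 0) passes from a set to its closure,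
   because norm1 - c * lf is (1 + c)-Lipschitz. *)
Lemma closure3_dominated (A : pt3 -> Prop) (c : R) :
  0 <= c -> (forall q, A q -> norm1 q <= c * lf q) ->
  forall p, closure3 A p -> norm1 p <= c * lf p.
Proof.
  intros Hc HA p Hp. rewrite closure3_dist1 in Hp.
  apply Rnot_lt_le; intros Hgap.
  destruct (Hp ((norm1 p - c * lf p) / (2 * (1 + c)))) as [q [Hq Hpq]].
  { apply Rdiv_lt_0_compat; lra. }
  pose proof (HA q Hq) as Hbound; pose proof (norm1_lipschitz p q) as Hn;
  pose proof (lf_lipschitz p q) as Hl; pose proof (Rle_abs (lf q - lf p)) as Habs.
  rewrite Rabs_minus_sym in Habs.
  assert (Hmul : (1 + c) * dist1 p q < (norm1 p - c * lf p) / 2).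
  { apply (Rmult_lt_compat_l (1 + c)) in Hpq; [| lra].
    replace ((1 + c) * ((norm1 p - c * lf p) / (2 * (1 + c))))
      with ((norm1 p - c * lf p) / 2) in Hpq by (field; lra). exact Hpq. }
  assert (c * (lf q - lf p) <= c * dist1 p q) by (apply Rmult_le_compat_l; lra).
  lra.
Qed.

(* Writing u = x1^2, the equation reads u^2 - x0 u x2 + x0 x2^3 = 0.  For x2 >= 0 it forces
   u <= x0 x2 and (discriminant) 4 x2 <= x0; for x2 < 0 it gives x1^4 <= x0 |x2|^3. *)
Lemma abs_le_of_sq (x y : R) : 0 <= y -> x ^ 2 <= y ^ 2 -> Rabs x <= y.
Proof.
  intros Hy Hsq. rewrite <- (Rabs_pos_eq y) by exact Hy.
  apply Rsqr_le_abs_0. unfold Rsqr. lra.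
Qed.

Lemma curve_bound (x0 x1 x2 : R) :
  x1 ^ 4 - x0 * x1 ^ 2 * x2 + x0 * x2 ^ 3 = 0 -> 0 < x0 ->
  Rabs x0 + Rabs x1 + Rabs x2 <= 4 * (x0 - x2).
Proof.
  intros Heq Hx0. rewrite (Rabs_pos_eq x0) by lra.
  destruct (Rle_or_lt 0 x2) as [Hx2 | Hx2].
  - assert (Hu : x1 ^ 2 <= x0 * x2).
    { assert (0 <= x0 * x2 ^ 3) by (apply Rmult_le_pos; [lra | apply pow_le; lra]).
      assert (0 <= x0 * x2) by (apply Rmult_le_pos; lra).
      pose proof (pow2_ge_0 x1). nra. }
    assert (Hdisc : 4 * x2 <= x0).
    { destruct (Req_dec x2 0) as [-> | Hne]; [lra |].
      assert (0 < x0 * x2 ^ 2) by (apply Rmult_lt_0_compat; [lra | apply pow_lt; lra]).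
      pose proof (pow2_ge_0 (x1 ^ 2 - x0 * x2 / 2)). nra. }
    assert (Rabs x1 <= x0 / 2) by (apply abs_le_of_sq; nra).
    rewrite (Rabs_pos_eq x2) by lra. lra.
  - set (m := x0 - x2).
    assert (Hx1 : x1 ^ 4 <= m ^ 4).
    { assert (- x2 ^ 3 <= m ^ 3).
      { replace (- x2 ^ 3) with ((- x2) ^ 3) by ring. apply pow_incr. unfold m; lra. }
      assert (0 <= m ^ 3) by (apply pow_le; unfold m; lra).
      assert (0 <= x0 * x1 ^ 2 * - x2)
        by (apply Rmult_le_pos; [pose proof (pow2_ge_0 x1); nra | lra]).
      replace (m ^ 4) with (m * m ^ 3) by ring.
      assert (x0 * m ^ 3 <= m * m ^ 3) by (apply Rmult_le_compat_r; unfold m in *; lra).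
      nra. }
    assert (Rabs x1 <= m).
    { apply abs_le_of_sq; [unfold m; lra |].
      assert (Habs : Rabs (x1 ^ 2) <= m ^ 2) by (apply abs_le_of_sq; [apply pow2_ge_0 | lra]).
      rewrite Rabs_pos_eq in Habs by apply pow2_ge_0. exact Habs. }
    rewrite (Rabs_left x2) by lra. unfold m in *. lra.
Qed.

Definition C : pt3 -> Prop := closure3 Stilde_o.

Lemma C_dominated (p : pt3) : C p -> norm1 p <= 4 * lf p.
Proof.
  apply closure3_dominated; [lra |].
  intros [x0 x1 x2] [Heq Hx0]; exact (curve_bound x0 x1 x2 Heq Hx0).
Qed.

Lemma C_closed : is_closed3 C.
Proof. exact (closure3_closed Stilde_o). Qed.

Lemma C_origin : C origin.
Proof.
  unfold C. apply closure3_dist1. intros eps Heps.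
  exists (P3 (eps / 2) 0 0). split.
  - unfold Stilde_o; simpl. split; [ring | lra].
  - unfold dist1; simpl.
    rewrite Rminus_0_l, Rabs_Ropp, Rminus_0_r, Rabs_R0, (Rabs_pos_eq (eps / 2)) by lra. lra.
Qed.

(* C is a cone: the equation is homogeneous, so Stilde_o is stable under positive scaling. *)
Lemma C_scale (t : R) (p : pt3) : 0 <= t -> C p -> C (pscale t p).
Proof.
  intros Ht Hp. destruct (Req_dec t 0) as [-> | Ht0].
  - replace (pscale 0 p) with origin by (apply pt3_ext; simpl; ring). exact C_origin.
  - unfold C in *. rewrite closure3_dist1 in Hp. apply closure3_dist1. intros eps Heps.
    destruct (Hp (eps / t)) as [[x0 x1 x2] [[Heq Hx0] Hd]]; [apply Rdiv_lt_0_compat; lra |].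
    exists (pscale t (P3 x0 x1 x2)). split.
    + unfold Stilde_o; cbn [c0 c1 c2 pscale] in *. split.
      * replace ((t * x1) ^ 4 - t * x0 * (t * x1) ^ 2 * (t * x2) + t * x0 * (t * x2) ^ 3)
          with (t ^ 4 * (x1 ^ 4 - x0 * x1 ^ 2 * x2 + x0 * x2 ^ 3)) by ring.
        rewrite Heq; ring.
      * apply Rmult_lt_0_compat; lra.
    + rewrite dist1_scale by exact Ht.
      apply (Rmult_lt_compat_l t) in Hd; [| lra].
      replace (t * (eps / t)) with eps in Hd by (field; lra). exact Hd.
Qed.

(* For three vectors with vanishing
   determinant a relation is read off from cross products; for four vectors either the
   first three are dependent or Cramer's rule gives a relation with a nonzero last
   coefficient. *)
Definition dot (u v : pt3) : R := c0 u * c0 v + c1 u * c1 v + c2 u * c2 v.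

Definition cross (u v : pt3) : pt3 :=
  P3 (c1 u * c2 v - c2 u * c1 v) (c2 u * c0 v - c0 u * c2 v) (c0 u * c1 v - c1 u * c0 v).

Definition det3 (u v w : pt3) : R := dot u (cross v w).

Definition lincomb3 (a : R) (u : pt3) (b : R) (v : pt3) (c : R) (w : pt3) : pt3 :=
  padd (pscale a u) (padd (pscale b v) (pscale c w)).

Definition lincomb4 (a1 : R) (r1 : pt3) (a2 : R) (r2 : pt3) (a3 : R) (r3 : pt3)
    (a4 : R) (r4 : pt3) : pt3 :=
  padd (pscale a1 r1) (lincomb3 a2 r2 a3 r3 a4 r4).

Lemma dot_self_nonzero (u : pt3) : u <> origin -> dot u u <> 0.
Proof.
  intros Hu Hdot. apply Hu, pt3_ext; simpl; unfold dot in Hdot;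
  pose proof (pow2_ge_0 (c0 u)); pose proof (pow2_ge_0 (c1 u)); pose proof (pow2_ge_0 (c2 u));
  nra.
Qed.

Lemma lincomb_parallel (u v w : pt3) :
  lincomb3 0 u (dot w w) v (- dot v w) w = cross w (cross v w).
Proof. apply pt3_ext; unfold lincomb3, dot, cross; simpl; ring. Qed.

Lemma lincomb_triple (u v w : pt3) :
  lincomb3 (dot (cross v w) (cross v w)) u (- dot (cross u w) (cross v w)) v
           (- dot (cross v u) (cross v w)) w
  = pscale (det3 u v w) (cross v w).
Proof. apply pt3_ext; unfold lincomb3, det3, dot, cross; simpl; ring. Qed.

Lemma dependent3 (u v w : pt3) : det3 u v w = 0 ->
  exists a b c, (a <> 0 \/ b <> 0 \/ c <> 0) /\ lincomb3 a u b v c w = origin.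
Proof.
  intros Hdet.
  destruct (classic (cross v w = origin)) as [Hvw | Hvw].
  - destruct (classic (w = origin)) as [-> | Hw].
    + exists 0, 0, 1; split; [lra |]. apply pt3_ext; unfold lincomb3; simpl; ring.
    + exists 0, (dot w w), (- dot v w); split; [right; left; apply dot_self_nonzero, Hw |].
      rewrite lincomb_parallel, Hvw. apply pt3_ext; simpl; ring.
  - eexists _, _, _; split; [left; apply dot_self_nonzero, Hvw |].
    rewrite lincomb_triple, Hdet. apply pt3_ext; simpl; ring.
Qed.

Lemma dependent4 (r1 r2 r3 r4 : pt3) : exists a1 a2 a3 a4,
  (a1 <> 0 \/ a2 <> 0 \/ a3 <> 0 \/ a4 <> 0) /\ lincomb4 a1 r1 a2 r2 a3 r3 a4 r4 = origin.
Proof.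
  destruct (Req_dec (det3 r1 r2 r3) 0) as [Hdet | Hdet].
  - destruct (dependent3 r1 r2 r3 Hdet) as [a [b [c [Hne Hrel]]]].
    exists a, b, c, 0; split; [tauto |].
    apply (f_equal c0) in Hrel as E0; apply (f_equal c1) in Hrel as E1;
    apply (f_equal c2) in Hrel as E2.
    apply pt3_ext; unfold lincomb4, lincomb3 in *; simpl in *; lra.
  - exists (- det3 r4 r2 r3), (- det3 r1 r4 r3), (- det3 r1 r2 r4), (det3 r1 r2 r3).
    split; [tauto |]. apply pt3_ext; unfold lincomb4, lincomb3, det3, dot, cross; simpl; ring.
Qed.

Lemma max4_attained (a1 a2 a3 a4 : R) : exists k, (k = a1 \/ k = a2 \/ k = a3 \/ k = a4) /\
  a1 <= k /\ a2 <= k /\ a3 <= k /\ a4 <= k.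
Proof.
  exists (Rmax (Rmax a1 a2) (Rmax a3 a4)).
  split; unfold Rmax.
  - repeat destruct Rle_dec; tauto.
  - repeat destruct Rle_dec; lra.
Qed.

Lemma eliminate_last (a1 a2 a3 a4 x1 x2 x3 x4 : R) : a4 <> 0 ->
  a1 * x1 + (a2 * x2 + (a3 * x3 + a4 * x4)) = 0 ->
  x1 + (x2 + (x3 + x4)) = (1 - a1 / a4) * x1 + ((1 - a2 / a4) * x2 + (1 - a3 / a4) * x3).
Proof.
  intros Ha Hrel.
  replace x4 with (- (a1 * x1 + a2 * x2 + a3 * x3) / a4) by (field_simplify_eq; lra).
  field; exact Ha.
Qed.

(* Conic Carathéodory in R^3: for a cone A, the convex hull of A consists of the sums of
   three points of A, since a sum of four points of A can always be shortened. *)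
Section ConicHull.

Variable A : pt3 -> Prop.
Hypothesis A_origin : A origin.
Hypothesis A_scale : forall t p, 0 <= t -> A p -> A (pscale t p).

Definition sum3 (p : pt3) : Prop :=
  exists r1 r2 r3, A r1 /\ A r2 /\ A r3 /\ p = padd r1 (padd r2 r3).

Lemma sum4_shorten_last (r1 r2 r3 r4 : pt3) (a1 a2 a3 a4 : R) :
  A r1 -> A r2 -> A r3 -> 0 < a4 -> a1 <= a4 -> a2 <= a4 -> a3 <= a4 ->
  lincomb4 a1 r1 a2 r2 a3 r3 a4 r4 = origin ->
  sum3 (padd r1 (padd r2 (padd r3 r4))).
Proof.
  intros H1 H2 H3 Ha4 h1 h2 h3 Hrel.
  assert (Hw : forall a, a <= a4 -> 0 <= 1 - a / a4).
  { intros a ha. assert (a / a4 <= 1); [| lra].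
    apply (Rmult_le_reg_r a4); [exact Ha4 |]. field_simplify; lra. }
  exists (pscale (1 - a1 / a4) r1), (pscale (1 - a2 / a4) r2), (pscale (1 - a3 / a4) r3).
  repeat split; try (apply A_scale; auto).
  apply (f_equal c0) in Hrel as E0; apply (f_equal c1) in Hrel as E1;
  apply (f_equal c2) in Hrel as E2.
  unfold lincomb4, lincomb3 in *; simpl in *.
  apply pt3_ext; simpl; apply eliminate_last; lra.
Qed.

Lemma sum4_shorten (r1 r2 r3 r4 : pt3) : A r1 -> A r2 -> A r3 -> A r4 ->
  sum3 (padd r1 (padd r2 (padd r3 r4))).
Proof.
  intros H1 H2 H3 H4.
  destruct (dependent4 r1 r2 r3 r4) as [b1 [b2 [b3 [b4 [Hne Hrel]]]]].
  assert (Hpos : exists a1 a2 a3 a4, (0 < a1 \/ 0 < a2 \/ 0 < a3 \/ 0 < a4) /\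
                 lincomb4 a1 r1 a2 r2 a3 r3 a4 r4 = origin).
  { destruct (Rlt_dec 0 b1), (Rlt_dec 0 b2), (Rlt_dec 0 b3), (Rlt_dec 0 b4);
      try (exists b1, b2, b3, b4; split; [tauto | exact Hrel]).
    exists (- b1), (- b2), (- b3), (- b4); split; [lra |].
    apply (f_equal c0) in Hrel as E0; apply (f_equal c1) in Hrel as E1;
    apply (f_equal c2) in Hrel as E2.
    apply pt3_ext; unfold lincomb4, lincomb3 in *; simpl in *; lra. }
  clear b1 b2 b3 b4 Hne Hrel.
  destruct Hpos as [a1 [a2 [a3 [a4 [Hpos Hrel]]]]].
  destruct (max4_attained a1 a2 a3 a4) as [k [Hk [k1 [k2 [k3 k4]]]]].
  assert (0 < k) by (destruct Hpos as [h | [h | [h | h]]]; lra).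
  (* it suffices to move the maximal coefficient to the last position *)
  assert (Hperm : forall s1 s2 s3 s4 e1 e2 e3 e4,
    lincomb4 e1 s1 e2 s2 e3 s3 e4 s4 = origin ->
    padd s1 (padd s2 (padd s3 s4)) = padd r1 (padd r2 (padd r3 r4)) ->
    A s1 -> A s2 -> A s3 -> 0 < e4 -> e1 <= e4 -> e2 <= e4 -> e3 <= e4 ->
    sum3 (padd r1 (padd r2 (padd r3 r4)))).
  { intros s1 s2 s3 s4 e1 e2 e3 e4 Hr Hs; rewrite <- Hs; intros.
    apply (sum4_shorten_last _ _ _ _ e1 e2 e3 e4); assumption. }
  destruct Hk as [-> | [-> | [-> | ->]]].
  - apply (Hperm r4 r2 r3 r1 a4 a2 a3 a1); auto;
      [rewrite <- Hrel |]; apply pt3_ext; unfold lincomb4, lincomb3; simpl; ring.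
  - apply (Hperm r1 r4 r3 r2 a1 a4 a3 a2); auto;
      [rewrite <- Hrel |]; apply pt3_ext; unfold lincomb4, lincomb3; simpl; ring.
  - apply (Hperm r1 r2 r4 r3 a1 a2 a4 a3); auto;
      [rewrite <- Hrel |]; apply pt3_ext; unfold lincomb4, lincomb3; simpl; ring.
  - apply (sum4_shorten_last _ _ _ _ a1 a2 a3 a4); assumption.
Qed.

Lemma conv3_sum3 (p : pt3) : conv3 A p <-> sum3 p.
Proof.
  split.
  - intros [l [Hl [_ ->]]].
    induction l as [| [w q] l IH]; simpl.
    + exists origin, origin, origin; repeat split; auto. apply pt3_ext; simpl; ring.
    + inversion Hl as [| x y [Hw Hq] Hl']; subst; simpl in Hw, Hq.
      destruct (IH Hl') as [r1 [r2 [r3 [H1 [H2 [H3 ->]]]]]].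
      apply sum4_shorten; auto.
  - intros [r1 [r2 [r3 [H1 [H2 [H3 ->]]]]]].
    exists [(1 / 3, pscale 3 r1); (1 / 3, pscale 3 r2); (1 / 3, pscale 3 r3)].
    repeat split.
    + repeat constructor; simpl; try lra; apply A_scale; auto; lra.
    + simpl; field.
    + apply pt3_ext; simpl; field.
Qed.

(* A domination  norm1 <= c * lf  on A extends to the convex hull, by subadditivity of
   norm1 and additivity of lf. *)
Lemma conv3_dominated (c : R) : (forall q, A q -> norm1 q <= c * lf q) ->
  forall p, conv3 A p -> norm1 p <= c * lf p.
Proof.
  intros Hdom p Hp. apply conv3_sum3 in Hp as [r1 [r2 [r3 [H1 [H2 [H3 ->]]]]]].
  pose proof (Hdom r1 H1); pose proof (Hdom r2 H2); pose proof (Hdom r3 H3).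
  pose proof (norm1_padd r1 (padd r2 r3)); pose proof (norm1_padd r2 r3).
  rewrite !lf_padd. lra.
Qed.

End ConicHull.

(* Since Defs names the curve S, the successor on nat is written succ. *)
Local Notation succ := Datatypes.S.

Definition increasing (phi : nat -> nat) : Prop := forall n, (phi n < phi (succ n))%nat.

Lemma increasing_strict (phi : nat -> nat) : increasing phi ->
  forall m n, (m < n)%nat -> (phi m < phi n)%nat.
Proof.
  intros Hphi m n Hmn. induction Hmn as [| n Hmn IH]; [apply Hphi |].
  specialize (Hphi n); lia.
Qed.

Lemma increasing_ge (phi : nat -> nat) : increasing phi -> forall n, (n <= phi n)%nat.
Proof. intros Hphi n. induction n as [| n IH]; [lia |]. specialize (Hphi n); lia. Qed.

Lemma increasing_comp (phi psi : nat -> nat) :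
  increasing phi -> increasing psi -> increasing (fun n => phi (psi n)).
Proof. intros Hphi Hpsi n. apply increasing_strict; [exact Hphi | apply Hpsi]. Qed.

Lemma inv_succ_small (eps : R) : 0 < eps ->
  exists N, forall n, (N <= n)%nat -> / INR (succ n) < eps.
Proof.
  intros Heps. destruct (archimed_cor1 eps Heps) as [N [HN HN0]].
  exists N; intros n Hn. apply (Rle_lt_trans _ (/ INR N)); [| exact HN].
  apply Rinv_le_contravar; [apply lt_0_INR; exact HN0 | apply le_INR; lia].
Qed.

Lemma Un_cv_subseq (u : nat -> R) (l : R) (phi : nat -> nat) :
  increasing phi -> Un_cv u l -> Un_cv (fun n => u (phi n)) l.
Proof.
  intros Hphi Hu eps Heps. destruct (Hu eps Heps) as [N HN].
  exists N; intros n Hn. apply HN. pose proof (increasing_ge phi Hphi n); lia.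
Qed.

Lemma real_subseq (u : nat -> R) (B : R) : (forall n, Rabs (u n) <= B) ->
  exists phi, increasing phi /\ exists l, Un_cv (fun n => u (phi n)) l.
Proof.
  intros Hb.
  destruct (Bolzano_Weierstrass u (fun x => - B <= x <= B) (compact_P3 (- B) B)) as [l Hl].
  { intro n; specialize (Hb n); unfold Rabs in Hb; destruct Rcase_abs in Hb; lra. }
  assert (Hnear : forall Nk : nat * nat, exists m,
    (fst Nk <= m)%nat /\ Rabs (u m - l) < / INR (succ (snd Nk))).
  { intros [N k].
    assert (Hpos : 0 < / INR (succ k)) by (apply Rinv_0_lt_compat, lt_0_INR; lia).
    destruct (Hl (disc l (mkposreal _ Hpos)) N) as [m [Hm Hd]].
    - exists (mkposreal _ Hpos); intros y Hy; exact Hy.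
    - exists m; split; [exact Hm | exact Hd]. }
  destruct (choice _ Hnear) as [g Hg].
  set (phi := nat_rect (fun _ => nat) (g (0, 0)%nat) (fun m pm => g (succ pm, succ m))).
  exists phi; split.
  - intro n. destruct (Hg (succ (phi n), succ n)) as [Hge _]. simpl in Hge. exact Hge.
  - exists l. intros eps Heps. destruct (inv_succ_small eps Heps) as [N HN].
    exists N; intros n Hn. unfold Rdist.
    assert (Hclose : Rabs (u (phi n) - l) < / INR (succ n)).
    { destruct n as [| n]; [apply (Hg (0, 0)%nat) | apply (Hg (succ (phi n), succ n))]. }
    specialize (HN n Hn); lra.
Qed.

Definition tends (X : nat -> pt3) (q : pt3) : Prop :=
  forall eps, 0 < eps -> exists N, forall n, (N <= n)%nat -> dist1 (X n) q < eps.

Lemma tends_subseq (X : nat -> pt3) (q : pt3) (phi : nat -> nat) :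
  increasing phi -> tends X q -> tends (fun n => X (phi n)) q.
Proof.
  intros Hphi HX eps Heps. destruct (HX eps Heps) as [N HN].
  exists N; intros n Hn. apply HN. pose proof (increasing_ge phi Hphi n); lia.
Qed.

Lemma tends_coords (X : nat -> pt3) (a b c : R) :
  Un_cv (fun n => c0 (X n)) a -> Un_cv (fun n => c1 (X n)) b ->
  Un_cv (fun n => c2 (X n)) c -> tends X (P3 a b c).
Proof.
  intros Ha Hb Hc eps Heps.
  destruct (Ha (eps / 3)) as [Na HNa]; [lra |]. destruct (Hb (eps / 3)) as [Nb HNb]; [lra |].
  destruct (Hc (eps / 3)) as [Nc HNc]; [lra |].
  exists (Nat.max Na (Nat.max Nb Nc)); intros n Hn. unfold dist1; simpl.
  specialize (HNa n ltac:(lia)); specialize (HNb n ltac:(lia)); specialize (HNc n ltac:(lia)).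
  unfold Rdist in *; lra.
Qed.

Lemma tends_padd (X Y : nat -> pt3) (p q : pt3) :
  tends X p -> tends Y q -> tends (fun n => padd (X n) (Y n)) (padd p q).
Proof.
  intros HX HY eps Heps.
  destruct (HX (eps / 2)) as [NX HNX]; [lra |]. destruct (HY (eps / 2)) as [NY HNY]; [lra |].
  exists (Nat.max NX NY); intros n Hn.
  specialize (HNX n ltac:(lia)); specialize (HNY n ltac:(lia)).
  pose proof (dist1_padd (X n) (Y n) p q); lra.
Qed.

Lemma tends_unique (X : nat -> pt3) (p q : pt3) : tends X p -> tends X q -> p = q.
Proof.
  intros Hp Hq. apply dist1_small_eq. intros eps Heps.
  destruct (Hp (eps / 2)) as [Np HNp]; [lra |]. destruct (Hq (eps / 2)) as [Nq HNq]; [lra |].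
  specialize (HNp (Nat.max Np Nq) ltac:(lia)); specialize (HNq (Nat.max Np Nq) ltac:(lia)).
  pose proof (dist1_triangle p (X (Nat.max Np Nq)) q). rewrite dist1_sym in HNp. lra.
Qed.

Lemma tends_closed (A : pt3 -> Prop) (X : nat -> pt3) (q : pt3) :
  is_closed3 A -> (forall n, A (X n)) -> tends X q -> A q.
Proof.
  intros HA HX Hq. apply HA, closure3_dist1. intros eps Heps.
  destruct (Hq eps Heps) as [N HN]. exists (X N); split; [apply HX |].
  rewrite dist1_sym; apply HN; lia.
Qed.

Lemma pt3_subseq (X : nat -> pt3) (B : R) : (forall n, norm1 (X n) <= B) ->
  exists phi, increasing phi /\ exists q, tends (fun n => X (phi n)) q.
Proof.
  intros HB.
  assert (Hcoord : forall n, Rabs (c0 (X n)) <= B /\ Rabs (c1 (X n)) <= B /\ Rabs (c2 (X n)) <= B).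
  { intro n; specialize (HB n); unfold norm1 in HB.
    pose proof (Rabs_pos (c0 (X n))); pose proof (Rabs_pos (c1 (X n)));
    pose proof (Rabs_pos (c2 (X n))); lra. }
  destruct (real_subseq (fun n => c0 (X n)) B ltac:(apply Hcoord)) as [phi0 [Hphi0 [a Ha]]].
  destruct (real_subseq (fun n => c1 (X (phi0 n))) B ltac:(intro; apply Hcoord))
    as [phi1 [Hphi1 [b Hb]]].
  destruct (real_subseq (fun n => c2 (X (phi0 (phi1 n)))) B ltac:(intro; apply Hcoord))
    as [phi2 [Hphi2 [c Hc]]].
  exists (fun n => phi0 (phi1 (phi2 n))); split.
  - apply increasing_comp; [exact Hphi0 | apply increasing_comp; assumption].
  - exists (P3 a b c). apply tends_coords.
    + apply (Un_cv_subseq (fun n => c0 (X (phi0 n))) a (fun n => phi1 (phi2 n)));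
        [apply increasing_comp |]; assumption.
    + exact (Un_cv_subseq (fun n => c1 (X (phi0 (phi1 n)))) b phi2 Hphi2 Hb).
    + exact Hc.
Qed.

(* The convex hull of a closed cone on which norm1 <= c * lf is closed: approximating
   points are sums of three points of the cone, each bounded through lf, so a common
   subsequence of the three summands converges. *)
Section ClosedHull.

Variable A : pt3 -> Prop.
Hypothesis A_origin : A origin.
Hypothesis A_scale : forall t p, 0 <= t -> A p -> A (pscale t p).
Hypothesis A_closed : is_closed3 A.

Lemma sum3_limit (R1 R2 R3 : nat -> pt3) (B : R) (p : pt3) :
  (forall n, A (R1 n) /\ A (R2 n) /\ A (R3 n)) ->
  (forall n, norm1 (R1 n) <= B /\ norm1 (R2 n) <= B /\ norm1 (R3 n) <= B) ->
  tends (fun n => padd (R1 n) (padd (R2 n) (R3 n))) p -> sum3 A p.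
Proof.
  intros HA HB Hp.
  destruct (pt3_subseq R1 B ltac:(apply HB)) as [phi1 [Hphi1 [q1 T1]]].
  destruct (pt3_subseq (fun n => R2 (phi1 n)) B ltac:(intro; apply HB))
    as [phi2 [Hphi2 [q2 T2]]].
  destruct (pt3_subseq (fun n => R3 (phi1 (phi2 n))) B ltac:(intro; apply HB))
    as [phi3 [Hphi3 [q3 T3]]].
  assert (Hphi23 : increasing (fun n => phi2 (phi3 n))) by (apply increasing_comp; assumption).
  apply (tends_subseq _ _ _ Hphi23) in T1; apply (tends_subseq _ _ _ Hphi3) in T2.
  exists q1, q2, q3; repeat split.
  - apply (tends_closed A _ _ A_closed (fun n => proj1 (HA _)) T1).
  - apply (tends_closed A _ _ A_closed (fun n => proj1 (proj2 (HA _))) T2).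
  - apply (tends_closed A _ _ A_closed (fun n => proj2 (proj2 (HA _))) T3).
  - apply (tends_unique (fun n => padd (R1 (phi1 (phi2 (phi3 n))))
                          (padd (R2 (phi1 (phi2 (phi3 n)))) (R3 (phi1 (phi2 (phi3 n))))))).
    + exact (tends_subseq _ p _ (increasing_comp _ _ Hphi1 Hphi23) Hp).
    + apply tends_padd; [exact T1 | apply tends_padd; assumption].
Qed.

(* Under norm1 <= c * lf with c > 0, lf is nonnegative on A, so each summand of a sum
   of three points of A is bounded by c times lf of the sum. *)
Lemma summands_bounded (c : R) (r1 r2 r3 : pt3) :
  0 < c -> (forall q, A q -> norm1 q <= c * lf q) -> A r1 -> A r2 -> A r3 ->
  let b := c * lf (padd r1 (padd r2 r3)) in norm1 r1 <= b /\ norm1 r2 <= b /\ norm1 r3 <= b.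
Proof.
  intros Hc Hdom H1 H2 H3 b. unfold b; rewrite !lf_padd.
  assert (Hl : forall r, A r -> 0 <= lf r).
  { intros r Hr. apply (Rmult_le_reg_l c); [exact Hc |]. rewrite Rmult_0_r.
    pose proof (norm1_nonneg r); pose proof (Hdom r Hr); lra. }
  pose proof (Hdom _ H1); pose proof (Hdom _ H2); pose proof (Hdom _ H3).
  pose proof (Hl _ H1); pose proof (Hl _ H2); pose proof (Hl _ H3).
  repeat split; (eapply Rle_trans; [eassumption |]); apply Rmult_le_compat_l; lra.
Qed.

Lemma conv3_closed (c : R) : 0 < c -> (forall q, A q -> norm1 q <= c * lf q) ->
  is_closed3 (conv3 A).
Proof.
  intros Hc Hdom p Hp. rewrite closure3_dist1 in Hp.
  apply (conv3_sum3 A A_origin A_scale).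
  assert (Happrox : forall n : nat, exists t : pt3 * pt3 * pt3,
    A (fst (fst t)) /\ A (snd (fst t)) /\ A (snd t) /\
    dist1 p (padd (fst (fst t)) (padd (snd (fst t)) (snd t))) < / INR (succ n)).
  { intro n. destruct (Hp (/ INR (succ n))) as [q [Hq Hpq]].
    { apply Rinv_0_lt_compat, lt_0_INR; lia. }
    apply (conv3_sum3 A A_origin A_scale) in Hq as [r1 [r2 [r3 [H1 [H2 [H3 ->]]]]]].
    exists (r1, r2, r3); simpl; auto. }
  destruct (choice _ Happrox) as [T HT].
  set (R1 := fun n => fst (fst (T n))); set (R2 := fun n => snd (fst (T n)));
  set (R3 := fun n => snd (T n)).
  apply (sum3_limit R1 R2 R3 (c * (lf p + 1))).
  - intro n; destruct (HT n) as [H1 [H2 [H3 _]]]; auto.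
  - (* lf of the approximating sum is at most lf p + 1 *)
    intro n; destruct (HT n) as [H1 [H2 [H3 Hd]]].
    fold (R1 n) (R2 n) (R3 n) in H1, H2, H3, Hd.
    assert (/ INR (succ n) <= 1).
    { rewrite <- Rinv_1. apply Rinv_le_contravar; [lra |]. apply (le_INR 1); lia. }
    pose proof (lf_lipschitz (padd (R1 n) (padd (R2 n) (R3 n))) p) as Hlip.
    rewrite dist1_sym in Hlip.
    pose proof (Rle_abs (lf (padd (R1 n) (padd (R2 n) (R3 n))) - lf p)).
    assert (Hle : c * lf (padd (R1 n) (padd (R2 n) (R3 n))) <= c * (lf p + 1))
      by (apply Rmult_le_compat_l; lra).
    destruct (summands_bounded c (R1 n) (R2 n) (R3 n) Hc Hdom H1 H2 H3) as [b1 [b2 b3]].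
    repeat split; lra.
  - intros eps Heps. destruct (inv_succ_small eps Heps) as [N HN].
    exists N; intros n Hn. destruct (HT n) as [_ [_ [_ Hd]]].
    rewrite dist1_sym. specialize (HN n Hn). fold (R1 n) (R2 n) (R3 n) in Hd. lra.
Qed.

End ClosedHull.

Theorem mainTheorem20 :
  (forall p, conv3 (closure3 Stilde_o) p -> p <> origin -> 0 < c0 p - c2 p) /\
  is_closed3 (conv3 (closure3 Stilde_o)) /\
  pointed3 (conv3 (closure3 Stilde_o)) /\
  ~ closed_at_infinity_S.
Proof.
  fold C.
  assert (Hdom : forall p, conv3 C p -> norm1 p <= 4 * lf p)
    by exact (conv3_dominated C C_origin C_scale 4 C_dominated).
  split; [| split; [| split]].
  - intros p Hp Hne. pose proof (Hdom p Hp); pose proof (norm1_pos p Hne).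
    unfold lf in *; lra.
  - exact (conv3_closed C C_origin C_scale C_closed 4 ltac:(lra) C_dominated).
  - intros p Hp Hopp. pose proof (Hdom _ Hp) as H1; pose proof (Hdom _ Hopp) as H2.
    rewrite norm1_opp, lf_opp in H2.
    apply NNPP; intros Hne. pose proof (norm1_pos p Hne); lra.
  - (* (0, 0, 1) lies in Stilde_c but violates norm1 <= 4 lf, hence is not in C *)
    intros Hclosed.
    assert (Hpt : C (P3 0 0 1)) by (apply Hclosed; unfold Stilde_c; simpl; split; [ring | lra]).
    apply C_dominated in Hpt. unfold norm1, lf in Hpt; simpl in Hpt.
    rewrite Rabs_R0, Rabs_R1 in Hpt. lra.
Qed.
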